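(* For every integer $n\ge 0$ and every $r\in\{6,20,27,34,41,48\}$, $c_8(49n+r)\equiv 0\pmod 2$.
   Context: A partition of $n\ge 0$ is a finite multiset of positive integers summing to $n$; the empty partition is the partition of $0$. For $n\ge 0$, $c_8(n)$ denotes the number of partitions $\lambda$ of $n$ such that either (a) all parts of $\lambda$ are even and distinct, or (b) there is an integer $j\ge 1$ such that the set of odd parts of $\lambda$ is exactly $\{1,3,\dots,2j-1\}$, each odd part at most $j$ appears once or twice, each odd part greater than $j$ appears exactly once, the even parts of $\lambda$ are distinct, and no even part lies in the interval $(j,2j]$ (i.e. every even part greater than $j$ is at least $2j+2$). *)

From mathcomp Require Import all_boot.
Set Implicit Arguments. Unset Strict Implicit. Unset Printing Implicit Defensive.

(* A partition of n is represented by its multiplicity function: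
   m : {ffun 'I_n -> 'I_n.+1}, where m i is the multiplicity of the part i+1.
   (Every part of a partition of n is <= n and occurs at most n times, so this
   is a bijective encoding of partitions of n, i.e. of multisets of positive
   integers summing to n.) *)
Definition is_partition_of (n : nat) (m : {ffun 'I_n -> 'I_n.+1}) : bool :=
  \sum_(i < n) i.+1 * m i == n.

(* multiplicity of the part k (0 if k = 0 or k > n) *)
Definition mult (n : nat) (m : {ffun 'I_n -> 'I_n.+1}) (k : nat) : nat :=
  if k is k'.+1 then
    (if (insub k' : option 'I_n) is Some i then val (m i) else 0)
  else 0.

(* (a): all parts even and distinct.  Parts are <= n, so it suffices to
   test k in 1..2n. *)
Definition condA (n : nat) (f : nat -> nat) : bool :=
  [forall k : 'I_(2 * n + 1), (0 < k) ==>
     ((odd k ==> (f k == 0)) && (~~ odd k ==> (f k <= 1)))].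

(* (b): there is j >= 1 such that the odd parts are exactly 1,3,...,2j-1,
   odd parts <= j occur once or twice, odd parts > j occur exactly once,
   even parts are distinct, and no even part lies in (j, 2j].
   Since 2j-1 must be a part, j <= n, and all relevant k are <= 2n. *)
Definition condB (n : nat) (f : nat -> nat) : bool :=
  [exists j : 'I_n.+1, (0 < j) &&
    [forall k : 'I_(2 * n + 1), (0 < k) ==>
      [&& odd k ==> ((0 < f k) == (k <= 2 * j - 1)),
          (odd k && (k <= j)) ==> (f k <= 2),
          (odd k && (j < k) && (0 < f k)) ==> (f k == 1),
          ~~ odd k ==> (f k <= 1)
        & (~~ odd k && (j < k) && (k <= 2 * j)) ==> (f k == 0)]]].

Definition c8 (n : nat) : nat :=
  #|[set m : {ffun 'I_n -> 'I_n.+1} |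
       is_partition_of m && (condA n (mult m) || condB n (mult m))]|.

From mathcomp Require Import all_boot all_algebra.
From mathcomp Require Import zify.
From mathcomp.algebra_tactics Require Import ring.
Import GRing.Theory.
Set Implicit Arguments. Unset Strict Implicit. Unset Printing Implicit Defensive.

(* We compute c8(N) modulo 2 as the coefficient of X^N of a polynomial over
   F_2 and show that this coefficient vanishes.

   The exponents
      E1 = k^2 + C(k+b,2) and E2 = 2l^2 + C(l+b',2) satisfy
      24 E1 + 1 = x^2 and 40 E2 + 1 = y^2, so E1 + E2 = N would give
      5x^2 + 3y^2 = 120N + 8; reducing mod 7 and then mod 49 shows this is
      impossible for N = 6, 20, 27, 34, 41, 48 (mod 49).
   2. Bailey chain.  Over a field of characteristic 2, alpha_0(k) =
      q^C(k,2) + q^C(k+1,2) (alpha_0(0) = 1) forms a Bailey pair with the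
      unit sequence; two applications of Bailey's lemma give, with
      alpha_e(k) = q^(e k^2) alpha_0(k), two finite identities in F_2(X).
      Truncated modulo X^(n+1) they yield
        [X^n] (X;X)_n sum_j X^(j^2) (X^(j+1);X)_(n-j)
          = [X^n] (sum_k alpha_1(k)) (sum_l alpha_2(l)),
      and the right-hand side is 0 at n = N by part 1.
   3. Counting.  For a fixed j, condition (b) (and condition (a), which is
      the case j = 0) restricts each part size independently, so the number
      of such partitions of n is [X^n] of a product of local generating
      polynomials; j is unique, so c8(n) is the sum over j of these
      coefficients.  Modulo 2 and X^(n+1) the local product is
      X^(j^2) (X;X)_j (X^(j+1);X)_(n-j)^2, which identifies c8(n) mod 2 with
      the left-hand side above. *)

(* The residues of the theorem: the N = 6 (mod 7) with N <> 13 (mod 49), i.e.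
   7 | 120N + 8 but 49 does not divide 120N + 8. *)
Definition bad_residues : seq nat := [:: 6; 20; 27; 34; 41; 48].

Definition alpha_exp (e k : nat) (b : bool) : nat := e * (k * k) + 'C(k + b, 2).

Lemma double_bin2 m : 2 * 'C(m, 2) = m * m.-1.
Proof. by elim: m => [|m IH] //; rewrite binS bin1 mulnDr IH; case: m {IH} => //= m; nia. Qed.

Lemma alpha_exp1_square k b : exists x, x * x = 24 * alpha_exp 1 k b + 1.
Proof.
have := double_bin2 (k + b); rewrite /alpha_exp.
case: b; rewrite /= ?addn1 ?addn0 => h2.
  by exists (6 * k + 1); nia.
case: k h2 => [|k] h2; first by exists 1.
by exists (6 * k + 5); rewrite /= in h2; nia.
Qed.

Lemma alpha_exp2_square l b : exists y, y * y = 40 * alpha_exp 2 l b + 1.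
Proof.
have := double_bin2 (l + b); rewrite /alpha_exp.
case: b; rewrite /= ?addn1 ?addn0 => h2.
  by exists (10 * l + 1); nia.
case: l h2 => [|l] h2; first by exists 1.
by exists (10 * l + 9); rewrite /= in h2; nia.
Qed.

(* 5x^2 + 3y^2 is divisible by 7 only when x and y are, since -3/5 = 5 is not
   a square mod 7. *)
Lemma form53_mod7 x y : 7 %| 5 * (x * x) + 3 * (y * y) -> (7 %| x) && (7 %| y).
Proof.
case: (edivnP x 7) (edivnP y 7) => a r -> /= hr [b u -> /= hu].
have -> : 5 * ((a * 7 + r) * (a * 7 + r)) + 3 * ((b * 7 + u) * (b * 7 + u))
        = 7 * (5 * (a * (7 * a + 2 * r)) + 3 * (b * (7 * b + 2 * u))) + (5 * (r * r) + 3 * (u * u)).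
  by nia.
rewrite dvdn_addr ?dvdn_mulr //.
rewrite (dvdn_addr _ (dvdn_mull a (dvdnn 7))) (dvdn_addr _ (dvdn_mull b (dvdnn 7))).
by case: r hr => [|[|[|[|[|[|[|r]]]]]]] // _; case: u hu => [|[|[|[|[|[|[|u]]]]]]].
Qed.

Lemma bad_residues_bounds r : r \in bad_residues -> (1 < r < 49).
Proof. by rewrite !inE => /orP[|/orP[|/orP[|/orP[|/orP[|]]]]] /eqP ->. Qed.

Lemma bad_residues_mod49 N : N %% 49 \in bad_residues ->
  (7 %| 120 * N + 8) && ~~ (49 %| 120 * N + 8).
Proof. by rewrite !inE => /orP[|/orP[|/orP[|/orP[|/orP[|]]]]] /eqP hN; apply/andP; split; lia. Qed.

(* Hence 5x^2 + 3y^2 = 120N + 8 has no solution: it would force 7 | x, y. *)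
Lemma bad_residue_form53 N x y : N %% 49 \in bad_residues ->
  5 * (x * x) + 3 * (y * y) != 120 * N + 8.
Proof.
move=> /bad_residues_mod49 /andP[h7 h49]; apply/eqP=> E.
have h7xy : 7 %| 5 * (x * x) + 3 * (y * y) by rewrite E.
have /andP[/dvdnP[a ha] /dvdnP[b hb]] := form53_mod7 h7xy.
move: E; rewrite ha hb => E.
by move: h49; rewrite -E; apply/negP/negPn/dvdnP; exists (5 * (a * a) + 3 * (b * b)); nia.
Qed.

Lemma no_representation N k l (b1 b2 : bool) : N %% 49 \in bad_residues ->
  alpha_exp 1 k b1 + alpha_exp 2 l b2 != N.
Proof.
move=> hN; apply/eqP=> E.
have [x hx] := alpha_exp1_square k b1; have [y hy] := alpha_exp2_square l b2.
by move: (bad_residue_form53 x y hN); rewrite -E hx hy; apply/negP/negPn/eqP; nia.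
Qed.

Local Open Scope ring_scope.

Definition qpoch (R : pzRingType) (x : R) (a len : nat) : R :=
  \prod_(0 <= j < len) (1 - x ^+ (a + j)).

Lemma qpoch0 (R : pzRingType) (x : R) a : qpoch x a 0 = 1.
Proof. by rewrite /qpoch big_geq. Qed.

Lemma qpochS (R : pzRingType) (x : R) a len :
  qpoch x a len.+1 = qpoch x a len * (1 - x ^+ (a + len)).
Proof. by rewrite /qpoch big_nat_recr. Qed.

Lemma qpochD (R : pzRingType) (x : R) a l1 l2 :
  qpoch x a (l1 + l2) = qpoch x a l1 * qpoch x (a + l1) l2.
Proof.
elim: l2 => [|l2 IH]; first by rewrite addn0 qpoch0 mulr1.
by rewrite addnS !qpochS IH mulrA addnA.
Qed.

Lemma rmorph_qpoch (R S : pzRingType) (f : {rmorphism R -> S}) (x : R) a len :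
  f (qpoch x a len) = qpoch (f x) a len.
Proof. by rewrite rmorph_prod; apply: eq_bigr => j _; rewrite rmorphB rmorph1 rmorphXn. Qed.

(* The ratio (q;q)_n (q;q)_2n / ((q;q)_(n-k) (q;q)_(n+k)) as a product of
   q-Pochhammer symbols. *)
Definition bailey_weight (R : pzRingType) (x : R) (n k : nat) : R :=
  qpoch x (n - k).+1 k * qpoch x (n + k).+1 (n - k).

Definition alpha (R : pzRingType) (x : R) (e k : nat) : R :=
  x ^+ (e * (k * k)) * (if k == 0%N then 1 else x ^+ 'C(k, 2) + x ^+ 'C(k.+1, 2)).

(* One step of Bailey's lemma multiplies alpha_e(k) by x^(k^2). *)
Lemma alphaS (R : pzRingType) (x : R) e k : x ^+ (k * k) * alpha x e k = alpha x e.+1 k.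
Proof. by rewrite /alpha mulrA -exprD mulSn. Qed.

Lemma rmorph_alpha (R S : pzRingType) (f : {rmorphism R -> S}) (x : R) e k :
  f (alpha x e k) = alpha (f x) e k.
Proof. by rewrite /alpha rmorphM rmorphXn; case: eqP; rewrite ?rmorph1 ?rmorphD ?rmorphXn. Qed.

(* The binomial C(i + 1 - d, 2) computed over the integers. *)
Definition bin2z (i d : nat) : nat := 'C(i.+1 - d, 2) + 'C(d - i, 2).

Lemma bin2zSS i d : bin2z i.+1 d.+1 = bin2z i d.
Proof. by rewrite /bin2z !subSS. Qed.

Lemma bin2zS i d : (bin2z i d.+1 + i = bin2z i d + d)%N.
Proof.
rewrite /bin2z subSS; case: (leqP d i) => h.
  rewrite !(@bin_small (_ - i)); try lia.
  by rewrite (_ : i.+1 - d = (i - d).+1)%N ?binS ?bin1; lia.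
rewrite !(@bin_small (_ - d)); try lia.
by rewrite (_ : d.+1 - i = (d - i).+1)%N ?binS ?bin1; lia.
Qed.

(* Finite Bailey machinery relative to a = 1 over a field F, for a q that is
   not a root of unity (so that all (q;q)_n are invertible). *)
Section Bailey.
Variables (F : fieldType) (q : F).
Hypothesis qfactor_neq0 : forall i, 1 - q ^+ i.+1 != 0.

Definition qfac (n : nat) : F := qpoch q 1 n.

Lemma qfacS n : qfac n.+1 = qfac n * (1 - q ^+ n.+1).
Proof. by rewrite /qfac qpochS add1n. Qed.

Lemma qfac0 : qfac 0 = 1. Proof. exact: qpoch0. Qed.

Lemma qfac_neq0 n : qfac n != 0.
Proof.
elim: n => [|n IH]; first by rewrite qfac0 oner_neq0.
by rewrite qfacS mulf_neq0.
Qed.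

Lemma qfacD a len : qfac (a + len) = qfac a * qpoch q a.+1 len.
Proof. by rewrite /qfac qpochD add1n. Qed.

Lemma qfac_split a b c : (a + b)%N = c -> qfac c = qfac a * qpoch q a.+1 b.
Proof. by move<-; rewrite qfacD. Qed.

Ltac qfield := field; by rewrite ?qfac_neq0 ?qfactor_neq0.

Definition vandermonde (N M : nat) : F :=
  \sum_(0 <= i < N.+1) q ^+ (i * (M + i)) / (qfac (N - i) * qfac i * qfac (M + i)).

(* The recurrence in N obtained by splitting 1 - q^(N+1) term by term. *)
Lemma vandermonde_rec N M :
  vandermonde N.+1 M * (1 - q ^+ N.+1) = vandermonde N M + q ^+ (M + N.+1) * vandermonde N M.+1.
Proof.
rewrite /vandermonde mulr_suml.
have split i : (i <= N.+1)%N ->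
    1 - q ^+ N.+1 = (1 - q ^+ (N.+1 - i)) + q ^+ (N.+1 - i) * (1 - q ^+ i).
  by move=> hi; rewrite -{1}(subnK hi) exprD; ring.
under eq_big_nat => i /andP[_ hi] do rewrite (split i hi) mulrDr.
rewrite big_split /=; congr (_ + _).
  rewrite big_nat_recr //= subnn expr0 subrr mulr0 addr0.
  by apply: eq_big_nat => i /andP[_ hi]; rewrite subSn // qfacS; qfield.
rewrite big_nat_recl // subn0 expr0 subrr !mulr0 add0r big_distrr /=.
apply: eq_big_nat => i /andP[_ hi]; rewrite qfacS subSS addnS.
have E : q ^+ (i.+1 * (M + i).+1) * q ^+ (N - i) = q ^+ (M + N.+1) * q ^+ (i * (M.+1 + i)).
  by rewrite -!exprD; congr (_ ^+ _); nia.
rewrite addSn; transitivity (q ^+ (i.+1 * (M + i).+1) * q ^+ (N - i)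
    / (qfac (N - i) * qfac i * qfac (M + i).+1)); first by qfield.
by rewrite E mulrA.
Qed.

Lemma vandermondeE N M : vandermonde N M = 1 / (qfac N * qfac (N + M)).
Proof.
elim: N M => [|N IH] M.
  by rewrite /vandermonde big_nat1 !subn0 qfac0 expr0 add0n addn0 !mul1r.
apply: (mulIf (qfactor_neq0 N)); rewrite vandermonde_rec !IH.
by rewrite addSn !addnS !qfacS (addnC M N); qfield.
Qed.

Definition bailey_pair (A B : nat -> F) : Prop :=
  forall n, B n = \sum_(0 <= k < n.+1) A k / (qfac (n - k) * qfac (n + k)).

(* The inner sum of Bailey's lemma, which is a Vandermonde sum. *)
Lemma bailey_inner n k : (k <= n)%N ->
  \sum_(k <= j < n.+1) q ^+ (j * j) / (qfac (n - j) * qfac (j - k) * qfac (j + k))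
  = q ^+ (k * k) / (qfac (n - k) * qfac (n + k)).
Proof.
move=> hk.
have -> : q ^+ (k * k) / (qfac (n - k) * qfac (n + k)) = q ^+ (k * k) * vandermonde (n - k) (k + k).
  rewrite vandermondeE (_ : (n - k + (k + k) = n + k)%N); last by lia.
  by qfield.
rewrite -{1}(add0n k) big_addn subSn // /vandermonde big_distrr /=.
apply: eq_big_nat => i /andP[_ hi].
have -> : ((i + k) * (i + k) = k * k + i * (k + k + i))%N by nia.
have -> : (n - (i + k) = n - k - i)%N by lia.
have -> : (i + k - k = i)%N by lia.
have -> : (i + k + k = k + k + i)%N by lia.
by rewrite exprD mulrA.
Qed.

(* Bailey's lemma in the limit rho1, rho2 -> infinity. *)
Lemma bailey_lemma A B : bailey_pair A B ->
  bailey_pair (fun k => q ^+ (k * k) * A k)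
              (fun n => \sum_(0 <= j < n.+1) q ^+ (j * j) * B j / qfac (n - j)).
Proof.
move=> hAB n.
have expand j : (j < n.+1)%N -> q ^+ (j * j) * B j / qfac (n - j) = \sum_(0 <= k < n.+1)
    (if (k <= j)%N then A k * (q ^+ (j * j) / (qfac (n - j) * qfac (j - k) * qfac (j + k))) else 0).
  move=> hj; rewrite hAB (big_nat_widen _ _ _ _ _ hj) big_mkcond /= big_distrr big_distrl /=.
  apply: eq_big_nat => k _; rewrite ltnS.
  by case: ifP => _; [qfield | rewrite mulr0 mul0r].
rewrite (eq_big_nat _ _ (fun j hj => expand j (andP hj).2)) exchange_big_nat /=.
apply: eq_big_nat => k /andP[_ hk].
rewrite (@big_cat_nat _ _ _ k) //= ?(ltnW hk) // big_nat_cond big1 ?add0r; last first.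
  by move=> j /andP[/andP[_ hj] _]; rewrite leqNgt hj.
rewrite (eq_big_nat _ _ (F2 := fun j => A k * (q ^+ (j * j)
    / (qfac (n - j) * qfac (j - k) * qfac (j + k))))); last by move=> j /andP[-> _].
by rewrite -big_distrr /= bailey_inner // mulrCA mulrA.
Qed.

Lemma bailey_pair_cleared A B n : bailey_pair A B ->
  qfac n * qfac (n + n) * B n = \sum_(0 <= k < n.+1) A k * bailey_weight q n k.
Proof.
move=> ->; rewrite big_distrr /=; apply: eq_big_nat => k /andP[_ hk].
rewrite /bailey_weight (@qfac_split (n - k) k n) 1?(@qfac_split (n + k) (n - k) (n + n));
  [|lia|lia].
by qfield.
Qed.

Hypothesis char2 : (1 + 1 : F) = 0.

(* An auxiliary sum; alpha_0 is a Bailey pair with the unit sequence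
   because these sums vanish in characteristic 2. *)
Definition hsum (m d : nat) : F :=
  \sum_(0 <= i < m.+1) q ^+ bin2z i d / (qfac i * qfac (m - i)).

Lemma hsum_rec m d : hsum m.+1 d.+1 * (1 - q ^+ m.+1) = (1 + q ^+ d) * hsum m d.
Proof.
rewrite /hsum mulr_suml.
have split i : (i <= m.+1)%N -> 1 - q ^+ m.+1 = (1 - q ^+ i) + q ^+ i * (1 - q ^+ (m.+1 - i)).
  by move=> hi; rewrite -{1}(subnKC hi) exprD; ring.
under eq_big_nat => i /andP[_ hi] do rewrite (split i hi) mulrDr.
rewrite big_split /= mulrDl mul1r; congr (_ + _).
  rewrite big_nat_recl // expr0 subrr mulr0 add0r.
  by apply: eq_big_nat => i /andP[_ hi]; rewrite bin2zSS qfacS subSS; qfield.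
rewrite big_nat_recr //= subnn expr0 subrr !mulr0 addr0 big_distrr /=.
apply: eq_big_nat => i /andP[_ hi]; rewrite subSn // qfacS.
transitivity (q ^+ (bin2z i d.+1 + i) / (qfac i * qfac (m - i))); first by rewrite exprD; qfield.
by rewrite bin2zS exprD; qfield.
Qed.

(* The recursion reaches the factor 1 + q^0 = 0. *)
Lemma hsum_eq0 m d : (0 < d <= m)%N -> hsum m d = 0.
Proof.
elim: m d => [|m IH] [|d] hd //.
apply: (mulIf (qfactor_neq0 m)); rewrite mul0r hsum_rec.
case: d hd => [|d] hd; first by rewrite expr0 char2 mul0r.
by rewrite IH ?mulr0 //; lia.
Qed.

Lemma alpha0_sum_hsum n :
  \sum_(0 <= k < n.+1) alpha q 0 k / (qfac (n - k) * qfac (n + k)) = hsum (n + n) n.+1.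
Proof.
rewrite /hsum [in RHS](@big_cat_nat _ _ _ n) ?leqW ?leq_addr //=.
rewrite [X in _ = _ + X]big_nat_recl ?leq_addr // [in LHS]big_nat_recl //.
rewrite (@big_addn _ _ _ 0 (n + n) n) addnK.
have -> : bin2z n n.+1 = 0%N by rewrite /bin2z subnn subSnn.
rewrite /alpha mul0n expr0 mul1r subn0 addn0 addrCA; congr (_ + _).
rewrite [X in _ = X + _]big_nat_rev -big_split /=.
apply: eq_big_nat => k /andP[_ hk]; rewrite add0n.
have -> : bin2z (n - k.+1) n.+1 = 'C(k.+2, 2).
  rewrite /bin2z (_ : (n - k.+1).+1 - n.+1 = 0)%N; last by lia.
  by rewrite (_ : n.+1 - (n - k.+1) = k.+2)%N; last by lia.
have -> : bin2z (k + n).+1 n.+1 = 'C(k.+1, 2).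
  rewrite /bin2z (_ : (k + n).+2 - n.+1 = k.+1)%N; last by lia.
  by rewrite (_ : n.+1 - (k + n).+1 = 0)%N ?addn0; last by lia.
have -> : (n + n - (n - k.+1) = n + k.+1)%N by lia.
have -> : (n + n - (k + n).+1 = n - k.+1)%N by lia.
have -> : ((k + n).+1 = n + k.+1)%N by lia.
by qfield.
Qed.

Lemma bailey_unit_pair : bailey_pair (alpha q 0) (fun n => (n == 0%N)%:R).
Proof.
move=> n; rewrite alpha0_sum_hsum; case: n => [|n].
  by rewrite /hsum big_nat1 /bin2z qfac0 /= mulr1 divr1.
by rewrite hsum_eq0 //; lia.
Qed.

Lemma bailey_pair1 : bailey_pair (alpha q 1) (fun n => 1 / qfac n).
Proof.
move=> n; under eq_bigr do rewrite -alphaS.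
rewrite -(bailey_lemma bailey_unit_pair) big_nat_recl // big1 => [|j _].
  by rewrite eqxx mulr1n subn0 addr0 muln0 expr0 !mul1r.
by rewrite mulr0 mul0r.
Qed.

Lemma bailey_pair2 :
  bailey_pair (alpha q 2) (fun n => \sum_(0 <= j < n.+1) q ^+ (j * j) / (qfac j * qfac (n - j))).
Proof.
move=> n; under [in RHS]eq_bigr do rewrite -alphaS.
by rewrite -(bailey_lemma bailey_pair1); apply: eq_bigr => j _; rewrite mul1r invfM mulrA.
Qed.

Lemma qfac_double n : qfac (n + n) = \sum_(0 <= k < n.+1) alpha q 1 k * bailey_weight q n k.
Proof. by rewrite -(bailey_pair_cleared n bailey_pair1); qfield. Qed.

Lemma rr_cleared n :
  \sum_(0 <= j < n.+1) q ^+ (j * j) * (qpoch q j.+1 (n - j) * qpoch q (n - j).+1 (n + j))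
  = \sum_(0 <= k < n.+1) alpha q 2 k * bailey_weight q n k.
Proof.
rewrite -(bailey_pair_cleared n bailey_pair2) big_distrr /=.
apply: eq_big_nat => j /andP[_ hj].
rewrite (@qfac_split j (n - j) n) 1?(@qfac_split (n - j) (n + j) (n + n)); try lia.
by qfield.
Qed.
End Bailey.

Section Truncation.
Variable R : nzRingType.
Implicit Types (p s : {poly R}).

Definition vanishes_below (m : nat) (p : {poly R}) : bool := [forall i : 'I_m, p`_i == 0].

Lemma vanishes_belowP m p : reflect (forall i, (i < m)%N -> p`_i = 0) (vanishes_below m p).
Proof.
by apply: (iffP forallP) => [h i hi | h i]; apply/eqP; [exact: (h (Ordinal hi)) | exact: h].
Qed.

Lemma vanishes_below_poly0 m : vanishes_below m 0.
Proof. by apply/vanishes_belowP => i _; rewrite coef0. Qed.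

Lemma vanishes_below_0 p : vanishes_below 0 p.
Proof. by apply/vanishes_belowP. Qed.

Lemma vanishes_below_le m m' p : (m' <= m)%N -> vanishes_below m p -> vanishes_below m' p.
Proof. by move=> hm /vanishes_belowP hp; apply/vanishes_belowP => i hi; apply/hp/leq_trans/hm. Qed.

Lemma vanishes_belowD m p s : vanishes_below m p -> vanishes_below m s -> vanishes_below m (p + s).
Proof.
move=> /vanishes_belowP hp /vanishes_belowP hs; apply/vanishes_belowP => i hi.
by rewrite coefD hp ?hs ?addr0.
Qed.

Lemma vanishes_belowN m p : vanishes_below m p -> vanishes_below m (- p).
Proof. by move=> /vanishes_belowP hp; apply/vanishes_belowP => i hi; rewrite coefN hp ?oppr0. Qed.

Lemma vanishes_below_sum m (F : nat -> {poly R}) a b :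
  (forall i, (a <= i < b)%N -> vanishes_below m (F i)) -> vanishes_below m (\sum_(a <= i < b) F i).
Proof.
move=> h; apply/vanishes_belowP => j hj; rewrite coef_sum big_nat_cond big1 // => i /andP[hi _].
exact/vanishes_belowP/hj/h.
Qed.

Lemma vanishes_belowM a b p s :
  vanishes_below a p -> vanishes_below b s -> vanishes_below (a + b) (p * s).
Proof.
move=> /vanishes_belowP hp /vanishes_belowP hs; apply/vanishes_belowP => i hi.
rewrite coefM big1 // => j _.
case: (ltnP j a) => hj; first by rewrite hp ?mul0r.
by rewrite hs ?mulr0 //; have := ltn_ord j; lia.
Qed.

Lemma vanishes_belowMr a p s : vanishes_below a p -> vanishes_below a (p * s).
Proof. by move=> h; rewrite -[a]addn0; apply: vanishes_belowM h (vanishes_below_0 s). Qed.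

Lemma vanishes_belowMl a p s : vanishes_below a s -> vanishes_below a (p * s).
Proof. by move=> h; rewrite -[a]add0n; apply: vanishes_belowM (vanishes_below_0 p) h. Qed.

Lemma vanishes_below_Xn k : vanishes_below k ('X^k : {poly R}).
Proof. by apply/vanishes_belowP => i hi; rewrite coefXn; case: eqP hi => // ->; rewrite ltnn. Qed.

Lemma vanishes_below_coef m p s : vanishes_below m.+1 (p - s) -> p`_m = s`_m.
Proof. by move=> /vanishes_belowP h; apply/eqP; rewrite -subr_eq0 -coefB h. Qed.

Lemma vanishes_below_mul_congr m p p' s s' :
  vanishes_below m (p - p') -> vanishes_below m (s - s') -> vanishes_below m (p * s - p' * s').
Proof.
move=> hp hs; rewrite (_ : p * s - p' * s' = (p - p') * s + p' * (s - s')).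
  by apply: vanishes_belowD; [apply: vanishes_belowMr | apply: vanishes_belowMl].
by rewrite mulrBl mulrBr addrA subrK.
Qed.

Lemma vanishes_below_qpoch a len : vanishes_below a (qpoch 'X a len - 1).
Proof.
elim: len => [|len IH]; first by rewrite qpoch0 subrr; apply: vanishes_below_poly0.
rewrite qpochS (_ : _ * _ - 1 = (qpoch 'X a len - 1) * (1 - 'X^(a + len)) - 'X^(a + len));
  last first.
  by rewrite mulrBl mul1r opprB addrA addrAC addrK.
apply: vanishes_belowD; first exact: vanishes_belowMr.
by apply/vanishes_belowN/(vanishes_below_le (leq_addr len a))/vanishes_below_Xn.
Qed.

Lemma vanishes_below_prod m (f h : nat -> {poly R}) N :
  (forall k, (k < N)%N -> vanishes_below m (f k - h k)) ->
  vanishes_below m (\prod_(0 <= k < N) f k - \prod_(0 <= k < N) h k).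
Proof.
elim: N => [|N IH] H; first by rewrite !big_geq // subrr; apply: vanishes_below_poly0.
rewrite !big_nat_recr //=; apply: vanishes_below_mul_congr; last exact: H.
by apply: IH => k hk; apply/H/ltnW.
Qed.
End Truncation.

(* The identities of the Bailey section transfer to F_2[X] through F_2(X). *)
Lemma tofrac_inj (R : idomainType) : injective (@tofrac R).
Proof. by move=> p s /eqP; rewrite tofrac_eq => /eqP. Qed.

Lemma rmorph_bailey_weight (R S : pzRingType) (f : {rmorphism R -> S}) (x : R) n k :
  f (bailey_weight x n k) = bailey_weight (f x) n k.
Proof. by rewrite rmorphM !rmorph_qpoch. Qed.

Lemma F2_char2 : (1 + 1 : 'F_2) = 0.
Proof. exact: (@pchar_Fp_0 2). Qed.

Lemma fracF2_char2 : (1 + 1 : {fraction {poly 'F_2}}) = 0.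
Proof. by rewrite -tofrac1 -tofracD -polyC1 -polyCD F2_char2 tofrac0. Qed.

Lemma fracX_qfactor_neq0 i : 1 - tofrac 'X ^+ i.+1 != 0 :> {fraction {poly 'F_2}}.
Proof.
rewrite -tofrac1 -tofracXn -tofracB tofrac_eq0 subr_eq0.
apply/eqP => /(congr1 (fun p : {poly 'F_2} => p`_i.+1)).
by rewrite coef1 coefXn eqxx => /eqP; rewrite eq_sym oner_eq0.
Qed.

Lemma euler_identity n : qpoch ('X : {poly 'F_2}) 1 (n + n)
  = \sum_(0 <= k < n.+1) alpha 'X 1 k * bailey_weight 'X n k.
Proof.
apply: tofrac_inj; rewrite rmorph_qpoch rmorph_sum.
rewrite -[qpoch _ 1 _]/(qfac _ _) (qfac_double fracX_qfactor_neq0 fracF2_char2).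
by apply: eq_bigr => k _; rewrite rmorphM rmorph_alpha rmorph_bailey_weight.
Qed.

Lemma rr_identity n :
  \sum_(0 <= j < n.+1)
    'X^(j * j) * (qpoch ('X : {poly 'F_2}) j.+1 (n - j) * qpoch 'X (n - j).+1 (n + j))
  = \sum_(0 <= k < n.+1) alpha 'X 2 k * bailey_weight 'X n k.
Proof.
apply: tofrac_inj; rewrite !rmorph_sum.
under eq_bigr do rewrite !rmorphM rmorphXn !rmorph_qpoch.
under [in RHS]eq_bigr do rewrite rmorphM rmorph_alpha rmorph_bailey_weight.
exact: (rr_cleared fracX_qfactor_neq0 fracF2_char2).
Qed.

Lemma vanishes_below_alpha (R : nzRingType) e k :
  vanishes_below (e * (k * k)) (alpha ('X : {poly R}) e k).
Proof. exact/vanishes_belowMr/vanishes_below_Xn. Qed.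

Lemma vanishes_below_weight (R : nzRingType) n k : (k <= n)%N ->
  vanishes_below (n - k).+1 (bailey_weight ('X : {poly R}) n k - 1).
Proof.
move=> hk; rewrite -[1]mulr1; apply: vanishes_below_mul_congr; first exact: vanishes_below_qpoch.
by apply: (@vanishes_below_le _ (n + k).+1); [lia | exact: vanishes_below_qpoch].
Qed.

Lemma bailey_sum_trunc (R : nzRingType) e n : (0 < e)%N ->
  vanishes_below n.+1 (\sum_(0 <= k < n.+1) alpha ('X : {poly R}) e k * bailey_weight 'X n k
                      - \sum_(0 <= k < n.+1) alpha 'X e k).
Proof.
move=> he; rewrite -sumrB; apply: vanishes_below_sum => k /andP[_ hk].
rewrite -{2}[alpha _ e k]mulr1 -mulrBr.
apply: (@vanishes_below_le _ (e * (k * k) + (n - k).+1)); first by nia.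
exact: vanishes_belowM (vanishes_below_alpha R e k) (vanishes_below_weight R (hk : k <= n)%N).
Qed.

Lemma euler_trunc n :
  vanishes_below n.+1 (qpoch ('X : {poly 'F_2}) 1 n - \sum_(0 <= k < n.+1) alpha 'X 1 k).
Proof.
have -> : qpoch ('X : {poly 'F_2}) 1 n - \sum_(0 <= k < n.+1) alpha 'X 1 k
    = - (qpoch 'X 1 n * (qpoch 'X n.+1 n - 1))
      + (qpoch 'X 1 (n + n) - \sum_(0 <= k < n.+1) alpha 'X 1 k).
  by rewrite qpochD add1n; ring.
apply: vanishes_belowD; first exact/vanishes_belowN/vanishes_belowMl/vanishes_below_qpoch.
by rewrite euler_identity; apply: bailey_sum_trunc.
Qed.

Lemma rr_trunc n :
  vanishes_below n.+1 (\sum_(0 <= j < n.+1) 'X^(j * j) * qpoch ('X : {poly 'F_2}) j.+1 (n - j)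
                      - \sum_(0 <= k < n.+1) alpha 'X 2 k).
Proof.
set lhs := \sum_(0 <= j < n.+1) _.
have -> : lhs - \sum_(0 <= k < n.+1) alpha 'X 2 k
    = - (\sum_(0 <= j < n.+1)
           'X^(j * j) * qpoch 'X j.+1 (n - j) * (qpoch 'X (n - j).+1 (n + j) - 1))
      + (\sum_(0 <= j < n.+1) 'X^(j * j) * (qpoch 'X j.+1 (n - j) * qpoch 'X (n - j).+1 (n + j))
         - \sum_(0 <= k < n.+1) alpha 'X 2 k).
  rewrite addrA; congr (_ - _); rewrite -sumrN -big_split /=.
  by apply: eq_bigr => j _; ring.
apply: vanishes_belowD; last by rewrite rr_identity; apply: bailey_sum_trunc.
apply/vanishes_belowN/vanishes_below_sum => j /andP[_ hj].
apply: (vanishes_below_le _ (vanishes_belowM (vanishes_belowMr _ (vanishes_below_Xn _ (j * j)))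
                                              (vanishes_below_qpoch _ (n - j).+1 (n + j)))).
by nia.
Qed.

Lemma main_coef n :
  (qpoch ('X : {poly 'F_2}) 1 n * \sum_(0 <= j < n.+1) 'X^(j * j) * qpoch 'X j.+1 (n - j))`_n
  = ((\sum_(0 <= k < n.+1) alpha 'X 1 k) * (\sum_(0 <= k < n.+1) alpha 'X 2 k))`_n.
Proof.
apply: vanishes_below_coef.
set P := qpoch _ _ _; set S := \sum_(0 <= j < n.+1) _.
set A := \sum_(0 <= k < n.+1) _; set B := \sum_(0 <= k < n.+1) _.
have -> : P * S - A * B = P * (S - B) + (P - A) * B by ring.
apply: vanishes_belowD; [exact/vanishes_belowMl/rr_trunc | exact/vanishes_belowMr/euler_trunc].
Qed.

Lemma alpha_monomials (R : nzRingType) e k : alpha ('X : {poly R}) e k =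
  'X^(alpha_exp e k false) + (k != 0%N)%:R * 'X^(alpha_exp e k true).
Proof.
rewrite /alpha /alpha_exp addn0 addn1; case: k => [|k] /=.
  by rewrite !muln0 mulr1 mul0r addr0 bin0n.
by rewrite mul1r mulrDr -!exprD.
Qed.

Lemma alpha_product_coef (R : nzRingType) N k l : (N %% 49)%N \in bad_residues ->
  (alpha ('X : {poly R}) 1 k * alpha 'X 2 l)`_N = 0.
Proof.
move=> hN.
have hX b1 b2 : ('X^(alpha_exp 1 k b1) * 'X^(alpha_exp 2 l b2) : {poly R})`_N = 0.
  by rewrite -exprD coefXn eq_sym (negbTE (no_representation _ _ _ _ hN)).
rewrite !alpha_monomials !mulr_natl mulrDl !mulrDr !mulrnAl !mulrnAr.
by rewrite !coefD !coefMn !hX !mul0rn !addr0.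
Qed.

Lemma alpha_sums_coef (R : nzRingType) N m1 m2 : (N %% 49)%N \in bad_residues ->
  ((\sum_(0 <= k < m1) alpha ('X : {poly R}) 1 k) * (\sum_(0 <= l < m2) alpha 'X 2 l))`_N = 0.
Proof.
move=> hN; rewrite mulr_suml coef_sum big1 // => k _.
by rewrite mulr_sumr coef_sum big1 // => l _; rewrite alpha_product_coef.
Qed.

Lemma card_set_natr (R : pzSemiRingType) (T : finType) (C : pred T) :
  (#|[set x | C x]|%:R : R) = \sum_x (C x)%:R.
Proof.
rewrite -sum1_card natr_sum big_mkcond /=.
by apply: eq_bigr => x _; rewrite inE; case: (C x).
Qed.

Lemma multS n (m : {ffun 'I_n -> 'I_n.+1}) k (hk : (k < n)%N) : mult m k.+1 = m (Ordinal hk).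
Proof. by rewrite /mult insubT. Qed.

Lemma mult_large n (m : {ffun 'I_n -> 'I_n.+1}) k : (n <= k)%N -> mult m k.+1 = 0%N.
Proof. by move=> h; rewrite /mult insubF // ltnNge h. Qed.

(* Generating polynomial of the allowed multiplicities of the part k, for
   partitions of n, given a predicate P k s on multiplicities s. *)
Definition part_gf (n : nat) (P : nat -> nat -> bool) (k : nat) : {poly 'F_2} :=
  if (k <= n)%N then \sum_(0 <= s < n.+1) (if P k s then 'X^(k * s) else 0)
  else (P k 0%N)%:R.

(* A constraint on all multiplicities splits into the parts <= n, read off m,
   and the parts in (n, 2n], which have multiplicity 0. *)
Lemma forall_mult_split n (m : {ffun 'I_n -> 'I_n.+1}) (P : nat -> nat -> bool) :
  [forall k : 'I_(2 * n + 1), (0 < k)%N ==> P k (mult m k)] =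
  [forall i : 'I_n, P i.+1 (m i)] && all (fun k => P k.+1 0%N) (index_iota n (2 * n)).
Proof.
apply/forallP/andP => [h | [/forallP h1 /allP h2] [[|k] hk] //].
  split.
    apply/forallP => i; have hi : (i.+1 < 2 * n + 1)%N by have := ltn_ord i; lia.
    have := h (Ordinal hi); rewrite [nat_of_ord (Ordinal hi)]/= (multS m (ltn_ord i)) /=.
    by rewrite (_ : Ordinal (ltn_ord i) = i) //; apply: val_inj.
  apply/allP => k; rewrite mem_index_iota => /andP[hk1 hk2].
  have hk : (k.+1 < 2 * n + 1)%N by lia.
  by have := h (Ordinal hk); rewrite [nat_of_ord (Ordinal hk)]/= mult_large.
change ((0 < k.+1)%N ==> P k.+1 (mult m k.+1)); apply/implyP => _.
case: (ltnP k n) => hkn; first by rewrite (multS m hkn); exact: (h1 (Ordinal hkn)).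
by rewrite mult_large //; apply: h2; rewrite mem_index_iota; lia.
Qed.

Lemma prod_monomial_if (R : comNzRingType) (I : finType) (b : I -> bool) (e : I -> nat) :
  \prod_i (if b i then ('X : {poly R})^+ (e i) else 0)
  = if [forall i, b i] then 'X^(\sum_i e i) else 0.
Proof.
case: (boolP [forall i, b i]) => [/forallP H | /forallPn[i hi]].
  by rewrite -prodrXr; apply: eq_bigr => i _; rewrite H.
by rewrite (bigD1 i) //= (negbTE hi) mul0r.
Qed.

Lemma prod_natr_bool (R : pzSemiRingType) (r : seq nat) (b : nat -> bool) :
  \prod_(k <- r) ((b k)%:R : R) = (all b r)%:R.
Proof.
elim: r => [|x r IH]; first by rewrite big_nil.
by rewrite big_cons IH /=; case: (b x); rewrite ?mul1r ?mul0r.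
Qed.

Lemma count_gf n (P : nat -> nat -> bool) :
  \sum_(m : {ffun 'I_n -> 'I_n.+1})
     ((is_partition_of m && [forall k : 'I_(2 * n + 1), (0 < k)%N ==> P k (mult m k)])%:R : 'F_2)
  = (\prod_(0 <= k < 2 * n) part_gf n P k.+1)`_n.
Proof.
rewrite (@big_cat_nat _ _ _ n) //=; last by lia.
have -> : \prod_(0 <= k < n) part_gf n P k.+1 =
    \prod_(i < n) \sum_(s < n.+1) (if P i.+1 s then 'X^(i.+1 * s) else 0).
  by rewrite big_mkord; apply: eq_bigr => i _; rewrite /part_gf ltn_ord big_mkord.
have -> : \prod_(n <= k < 2 * n) part_gf n P k.+1
    = (all (fun k => P k.+1 0%N) (index_iota n (2 * n)))%:R.
  by rewrite -prod_natr_bool; apply: eq_big_nat => k /andP[h _]; rewrite /part_gf ltnNge h.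
rewrite bigA_distr_bigA /= mulr_suml coef_sum; apply: eq_bigr => m _.
rewrite prod_monomial_if forall_mult_split /is_partition_of.
case: [forall i, _]; case: all; rewrite ?mulr1 ?mulr0 ?mul0r ?coef0 ?coefXn ?andbF ?andbT //=.
by rewrite eq_sym.
Qed.

(* Multiplicity s of the part k is allowed in condition (b) with parameter j;
   j = 0 gives condition (a). *)
Definition allowed (j k s : nat) : bool :=
 [&& odd k ==> ((0 < s) == (k <= 2 * j - 1)),
     (odd k && (k <= j)) ==> (s <= 2),
     (odd k && (j < k) && (0 < s)) ==> (s == 1),
     ~~ odd k ==> (s <= 1)
   & (~~ odd k && (j < k) && (k <= 2 * j)) ==> (s == 0)]%N.

Definition cond_j (n j : nat) (f : nat -> nat) : bool :=
  [forall k : 'I_(2 * n + 1), (0 < k)%N ==> allowed j k (f k)].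

Lemma condA_cond_j n f : condA n f = cond_j n 0 f.
Proof.
apply: eq_forallb => -[[|k] hk] //=; rewrite /allowed /=.
by case: (odd k); case: (f k.+1) => [|[|s]].
Qed.

(* The parameter j is determined by the partition: 2j - 1 is the largest odd part. *)
Lemma cond_j_uniq n f (j j' : nat) : (j <= n)%N -> (j' <= n)%N ->
  cond_j n j f -> cond_j n j' f -> j = j'.
Proof.
wlog hle : j j' / (j <= j')%N.
  move=> H hj hj' h h'; case: (leqP j j') => c; first exact: H.
  by symmetry; apply: H => //; apply: ltnW.
move=> hj hj' h h'; apply/eqP; rewrite eqn_leq hle /=; apply/negP => hlt.
have hk : (2 * j + 1 < 2 * n + 1)%N by lia.
move/forallP/(_ (Ordinal hk)): h; move/forallP/(_ (Ordinal hk)): h'.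
rewrite /= /allowed addn1 /= oddM /= (_ : 2 * j < 2 * j' - 1)%N; last by lia.
rewrite (_ : 2 * j < 2 * j - 1 = false)%N; last by lia.
by case/and4P => /eqP -> _ _ _ /and4P [] /eqP.
Qed.

Lemma condAB_exists n f : (condA n f || condB n f) = [exists j : 'I_n.+1, cond_j n j f].
Proof.
rewrite condA_cond_j; apply/idP/existsP => [/orP[h | /existsP[j /andP[_ h]]] | [j h]].
- by exists ord0.
- by exists j.
case: (posnP j) => hj; first by move: h; rewrite hj => ->.
by apply/orP; right; apply/existsP; exists j; rewrite hj.
Qed.

Lemma natr_exists_uniq (R : pzSemiRingType) (T : finType) (P : pred T) :
  (forall x y, P x -> P y -> x = y) -> ([exists x, P x]%:R : R) = \sum_x (P x)%:R.
Proof.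
move=> Puniq; case: (pickP P) => [x0 hx0 | hnone]; last first.
  rewrite big1 => [|x _]; last by rewrite hnone.
  by rewrite (_ : [exists x, P x] = false) //; apply/negbTE/existsP => -[x]; rewrite hnone.
have -> : [exists x, P x] by apply/existsP; exists x0.
rewrite (bigD1 x0) //= hx0 big1 ?addr0 // => x hx.
by case: (boolP (P x)) => // Px; rewrite (Puniq _ _ Px hx0) eqxx in hx.
Qed.

Lemma c8_natr n :
  ((c8 n)%:R : 'F_2) = \sum_(j < n.+1) (\prod_(0 <= k < 2 * n) part_gf n (allowed j) k.+1)`_n.
Proof.
rewrite /c8 card_set_natr.
transitivity (\sum_(m : {ffun 'I_n -> 'I_n.+1}) \sum_(j < n.+1)
                ((is_partition_of m && cond_j n j (mult m))%:R : 'F_2)).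
  apply: eq_bigr => m _; rewrite condAB_exists.
  case: (is_partition_of m) => /=; last by rewrite big1.
  apply: natr_exists_uniq => j j' hj hj'; apply: val_inj.
  by apply: (cond_j_uniq _ _ hj hj'); rewrite -ltnS ltn_ord.
by rewrite exchange_big /=; apply: eq_bigr => j _; apply: count_gf.
Qed.

(* F_2[X] has characteristic 2: signs can be ignored and squaring is additive. *)
Lemma polyF2_pchar2 : 2 \in [pchar {poly 'F_2}].
Proof. by rewrite inE /= -(rmorph_nat (@polyC _)) /= (@pchar_Fp_0 2) // rmorph0. Qed.

Lemma subF2 (p s : {poly 'F_2}) : p - s = p + s.
Proof. exact: GRing.subr_pchar2 polyF2_pchar2 p s. Qed.

Lemma sqr_1subF2 (y : {poly 'F_2}) : (1 - y) ^+ 2 = 1 - y ^+ 2.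
Proof. by rewrite !subF2 sqrrD expr1n mul1r mulr2n (GRing.addrr_pchar2 polyF2_pchar2) addr0. Qed.

Lemma allowed_large j k s : (0 < k)%N -> (2 < s)%N -> allowed j k s = false.
Proof.
move=> hk hs.
have [s2 s1 s_eq1 s_pos] : [/\ (s <= 2) = false, (s <= 1) = false, (s == 1) = false & 0 < s]%N.
  by split; lia.
rewrite /allowed s2 s1 s_eq1 s_pos.
by case: (odd k) => //=; rewrite andbT; case: leqP; rewrite /= ?andbF.
Qed.

Lemma part_gf_small n j k : (2 <= n)%N -> (k <= n)%N -> (0 < k)%N ->
  part_gf n (allowed j) k = (allowed j k 0)%:R
    + (if allowed j k 1 then 'X^k else 0) + (if allowed j k 2 then 'X^k ^+ 2 else 0).
Proof.
move=> hn hkn hk; rewrite /part_gf hkn; case: n hn hkn => [|[|n]] // _ _.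
rewrite big_nat_recl // big_nat_recl // big_nat_recl // big1_seq => [|s _].
  by rewrite muln0 muln1 -exprM addr0 addrA; case: (allowed j k 0).
by rewrite allowed_large.
Qed.

(* The local factors of the product formula, modulo 2: the odd parts
   1, 3, ..., 2j-1 are mandatory, parts <= j contribute 1 + X^k = 1 - X^k
   (even) or X^k + X^2k (odd), and even parts > 2j are distinct. *)
Definition odd_part_factor (j k : nat) : {poly 'F_2} :=
  if odd k && (k <= 2 * j - 1)%N then 'X^k else 1.
Definition small_part_factor (j k : nat) : {poly 'F_2} :=
  if (k <= j)%N then 1 - 'X^k else 1.
Definition even_part_factor (j k : nat) : {poly 'F_2} :=
  if ~~ odd k && (2 * j < k)%N then 1 - 'X^k else 1.
Definition local_factor (j k : nat) : {poly 'F_2} :=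
  odd_part_factor j k * small_part_factor j k * even_part_factor j k.

Lemma part_gf_local n j k : (2 <= n)%N -> (0 < k <= n)%N ->
  part_gf n (allowed j) k = local_factor j k.
Proof.
move=> hn /andP[hk hkn]; rewrite part_gf_small // /local_factor /odd_part_factor.
rewrite /small_part_factor /even_part_factor /allowed !subF2 /=.
case: (odd k) => /=; case: (leqP k j) => h1 /=.
- by rewrite (_ : k <= 2 * j - 1)%N //=; [ring | lia].
- by case: (leqP k (2 * j - 1)) => h2 /=; ring.
- by rewrite (_ : 2 * j < k = false)%N /=; [ring | lia].
- by case: (leqP k (2 * j)) => h2 /=; ring.
Qed.

Lemma allowed0 j k : allowed j k 0 = ~~ (odd k && (k <= 2 * j - 1))%N.
Proof.
rewrite /allowed; case: (odd k) => /=; last by rewrite implybT.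
by rewrite ltnn; case: (k <= 2 * j - 1)%N; case: (k <= j)%N; case: (j < k)%N.
Qed.

Lemma local_factor_large n j k : (n < k)%N ->
  vanishes_below n.+1 (local_factor j k - (~~ (odd k && (k <= 2 * j - 1)))%N%:R).
Proof.
move=> hk; have hXk : vanishes_below n.+1 ('X^k : {poly 'F_2}).
  exact: vanishes_below_le hk (vanishes_below_Xn _ k).
have h1 b : vanishes_below n.+1 ((if b then 1 - 'X^k else 1) - 1 : {poly 'F_2}).
  case: b; last by rewrite subrr vanishes_below_poly0.
  by rewrite addrAC subrr add0r; apply: vanishes_belowN.
rewrite -[_%:R]mulr1 -[_%:R * 1]mulr1; apply: vanishes_below_mul_congr; last exact: h1.
apply: vanishes_below_mul_congr; last exact: h1.
by rewrite /odd_part_factor; case: ifP => _; rewrite ?subr0 ?subrr ?vanishes_below_poly0.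
Qed.

Lemma part_gf_trunc n j k : (2 <= n)%N -> (0 < k)%N ->
  vanishes_below n.+1 (part_gf n (allowed j) k - local_factor j k).
Proof.
move=> hn hk; case: (leqP k n) => hkn.
  by rewrite part_gf_local ?hk // subrr vanishes_below_poly0.
rewrite /part_gf leqNgt hkn /= allowed0 -opprB; apply: vanishes_belowN.
exact: local_factor_large.
Qed.

Lemma prod_pairs (R : pzSemiRingType) (h : nat -> R) n :
  \prod_(0 <= k < 2 * n) h k.+1 = \prod_(0 <= m < n) (h (2 * m).+1 * h (2 * m).+2).
Proof.
elim: n => [|n IH]; first by rewrite !big_geq.
rewrite (_ : 2 * n.+1 = (2 * n).+2)%N; last by lia.
by rewrite !big_nat_recr //= IH mulrA.
Qed.

Lemma sum_odd j : (\sum_(0 <= m < j) (2 * m).+1 = j * j)%N.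
Proof.
elim: j => [|j IH]; first by rewrite big_geq.
by rewrite big_nat_recr //= IH; lia.
Qed.

Lemma prod_odd_part_factor n j : (j <= n)%N ->
  \prod_(0 <= k < 2 * n) odd_part_factor j k.+1 = 'X^(j * j).
Proof.
move=> hj; rewrite prod_pairs.
under eq_big_nat => m _.
  rewrite /odd_part_factor /= oddM /= mulr1 (_ : (2 * m < 2 * j - 1) = (m < j))%N; last by lia.
  over.
rewrite (@big_cat_nat _ _ _ j) //= [X in _ * X]big1_seq ?mulr1 => [|m]; last first.
  by move=> /andP[_]; rewrite mem_index_iota => /andP[h _]; rewrite ltnNge h.
rewrite -sum_odd -prodrXr; apply: eq_big_nat => m /andP[_ hm]; by rewrite hm.
Qed.

Lemma prod_small_part_factor n j : (j <= n)%N ->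
  \prod_(0 <= k < 2 * n) small_part_factor j k.+1 = qpoch 'X 1 j.
Proof.
move=> hj; rewrite (@big_cat_nat _ _ _ j) //=; last by lia.
rewrite [X in _ * X]big1_seq ?mulr1 => [|k /andP[_]]; last first.
  by rewrite mem_index_iota => /andP[h _]; rewrite /small_part_factor ltnNge h.
by apply: eq_big_nat => k /andP[_ hk]; rewrite /small_part_factor hk add1n.
Qed.

(* Frobenius: (1 - X^2m) = (1 - X^m)^2 in F_2[X]. *)
Lemma prod_even_part_factor n j : (j <= n)%N ->
  \prod_(0 <= k < 2 * n) even_part_factor j k.+1 = qpoch 'X j.+1 (n - j) ^+ 2.
Proof.
move=> hj; rewrite prod_pairs.
under eq_big_nat => m _.
  rewrite /even_part_factor /= oddM /= mul1r (_ : 2 * j < (2 * m).+2 = (j <= m))%N; last by lia.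
  over.
rewrite (@big_cat_nat _ _ _ j) //= big1_seq ?mul1r => [|m]; last first.
  by move=> /andP[_]; rewrite mem_index_iota => /andP[_ h]; rewrite leqNgt h.
rewrite /qpoch -prodrXl -{1}[j]add0n big_addn.
apply: eq_big_nat => i /andP[_ hi]; rewrite leq_addl sqr_1subF2 -exprM.
by congr (1 - 'X^_); lia.
Qed.

Lemma prod_local_factor n j : (j <= n)%N ->
  \prod_(0 <= k < 2 * n) local_factor j k.+1
  = 'X^(j * j) * qpoch 'X 1 j * qpoch 'X j.+1 (n - j) ^+ 2.
Proof.
move=> hj; rewrite /local_factor !big_split /=.
by rewrite prod_odd_part_factor ?prod_small_part_factor ?prod_even_part_factor.
Qed.

Lemma c8_gf n : (2 <= n)%N -> ((c8 n)%:R : 'F_2) =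
  (qpoch 'X 1 n * \sum_(0 <= j < n.+1) 'X^(j * j) * qpoch 'X j.+1 (n - j))`_n.
Proof.
move=> hn; rewrite c8_natr.
have trunc j : (\prod_(0 <= k < 2 * n) part_gf n (allowed j) k.+1)`_n
             = (\prod_(0 <= k < 2 * n) local_factor j k.+1)`_n.
  by apply/vanishes_below_coef/vanishes_below_prod => k _; apply: part_gf_trunc.
under eq_bigr do rewrite trunc.
rewrite -coef_sum mulr_sumr big_mkord; apply: (congr1 (coefp n)).
apply: eq_bigr => -[j /=]; rewrite ltnS => hj _.
rewrite prod_local_factor // -{2}(subnKC hj) qpochD add1n.
by ring.
Qed.

Local Close Scope ring_scope.

Theorem theorem9 (n r : nat) :
  r \in [:: 6; 20; 27; 34; 41; 48] -> c8 (49 * n + r) %% 2 = 0.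
Proof.
move=> hr; have /andP[r_gt1 r_lt49] := bad_residues_bounds hr; set N := (49 * n + r)%N.
have hN : (N %% 49)%N \in bad_residues by rewrite /N mulnC modnMDl modn_small.
have : (2 %| c8 N)%N.
  by rewrite (dvdn_pcharf (pchar_Fp (isT : prime 2))) c8_gf ?main_coef ?alpha_sums_coef //; lia.
by rewrite /dvdn => /eqP.
Qed.
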